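(* Let $\rho_{ABC}=\sum_bp_B(b)|b\rangle\langle b|_B\otimes\rho^{|b}_{AC}$ be a state classical on $B$, and $\alpha\in(1,\infty)$. Then $$H_\alpha(A|B^{\uparrow}C^{\downarrow})_\rho=\sup_{q_B\in\Delta(B)}-D_\alpha(\rho_{ABC}\|I_A\otimes\sigma_{BC}),$$ where $\sigma_{BC}=\sum_bq_B(b)|b\rangle\langle b|\otimes\rho^{|b}_C$ and $\rho^{|b}_C=\mathrm{tr}_A[\rho^{|b}_{AC}]$.
   Context: Finite-dimensional spaces, $\log$ base 2. For $\alpha>1$, $D_\alpha(\rho\|\sigma)=\frac{1}{\alpha-1}\log\big(\mathrm{tr}[(\sigma^{\frac{1-\alpha}{2\alpha}}\rho\sigma^{\frac{1-\alpha}{2\alpha}})^\alpha]/\mathrm{tr}\rho\big)$ if $\mathrm{supp}\rho\subseteq\mathrm{supp}\sigma$, else $+\infty$. $H^{\downarrow}_\alpha(A|C)_\rho=-D_\alpha(\rho_{AC}\|I_A\otimes\rho_C)$. Partially optimized conditional Rényi entropy: $H_\alpha(A|B^{\uparrow}C^{\downarrow})_\rho:=\frac{\alpha}{1-\alpha}\log\big(\sum_bp_B(b)2^{\frac{1-\alpha}{\alpha}H^{\downarrow}_\alpha(A|C)_{\rho^{|b}}}\big)$. $\Delta(B)$ is the set of probability distributions on the alphabet of $B$. *)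

From HB Require Import structures.
From mathcomp Require Import all_boot all_order all_algebra.
From mathcomp Require Import sesquilinear spectral.
From mathcomp Require Import complex.
From mathcomp Require Import classical_sets boolp reals ereal exp.

Set Implicit Arguments.
Unset Strict Implicit.
Unset Printing Implicit Defensive.

Import Order.TTheory GRing.Theory Num.Theory.
Local Open Scope ring_scope.

(* Operators on the Hilbert space with orthonormal basis indexed by a finite *)
(* type T: square complex matrices of size #|T|.  Basis vectors are indexed  *)
(* via enum_rank / enum_val.                                                 *)
Definition Op (R : realType) (T : finType) := 'M[R[i]]_#|T|.

Definition ent (R : realType) (T : finType) (X : Op R T) (x y : T) : R[i] :=
  X (enum_rank x) (enum_rank y).

Definition opE (R : realType) (T : finType) (f : T -> T -> R[i]) : Op R T :=
  \matrix_(i, j) f (enum_val i) (enum_val j).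

Definition psdmx (R : realType) n (X : 'M[R[i]]_n) : Prop :=
  X \is hermsymmx /\
  forall u : 'rV[R[i]]_n, 0 <= (u *m X *m (map_mx Num.Def.conjC u^T)) 0 0.

Definition density (R : realType) (T : finType) (X : Op R T) : Prop :=
  psdmx X /\ \tr X = 1.

Definition prob_dist (R : realType) (B : finType) (q : B -> R) : Prop :=
  (forall b, 0 <= q b) /\ \sum_b q b = 1.

(* real power X^s of a Hermitian matrix via its spectral decomposition
   X = U^-1 diag(lambda) U; eigenvalue 0 is sent to 0 when s <> 0
   (powR 0 s = 0 for s <> 0), i.e. negative powers are taken on the support
   (generalized inverse), as is standard. *)
Definition mxpowR (R : realType) n (X : 'M[R[i]]_n) (s : R) : 'M[R[i]]_n :=
  invmx (spectralmx X) *m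
  diag_mx (map_mx (fun z : R[i] => ((powR (complex.Re z) s)%:C)%C)
                  (spectral_diag X)) *m spectralmx X.

(* supp X subseteq supp Y  (supports = column spaces / ranges) *)
Definition supp_sub (R : realType) n (X Y : 'M[R[i]]_n) : bool :=
  (X^T <= Y^T)%MS.

Definition log2 (R : realType) (x : R) : R := ln x / ln 2.

Definition Dalpha (R : realType) (T : finType) (a : R) (rho sig : Op R T)
  : \bar R :=
  if supp_sub rho sig then
    let S := mxpowR sig ((1 - a) / (2 * a)) in
    ((a - 1)^-1 *
     log2 (complex.Re (\tr (mxpowR (S *m rho *m S) a)) /
           complex.Re (\tr rho)))%:E
  else +oo%E.

Definition tensI (R : realType) (X T : finType) (Y : Op R T) : Op R (X * T)%type :=
  opE (fun u v : (X * T)%type => (u.1 == v.1)%:R * ent Y u.2 v.2).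

Definition ptr1 (R : realType) (X T : finType) (Y : Op R (X * T)%type) : Op R T :=
  opE (fun t t' : T => \sum_(x : X) ent Y (x, t) (x, t')).

Definition Hdown (R : realType) (A C : finType) (a : R) (rho : Op R (A * C)%type)
  : \bar R :=
  (- Dalpha a rho (tensI A (ptr1 rho)))%E.

Definition pow2e (R : realType) (x : \bar R) : \bar R :=
  expeR (x * (ln (2 : R))%:E)%E.
Definition log2e (R : realType) (x : \bar R) : \bar R :=
  (lne x * ((ln (2 : R))^-1)%:E)%E.

(* partially optimized conditional Renyi entropy H_alpha(A|B^up C^down),
   for rho_ABC = sum_b p(b) |b><b| (x) rho^{|b}_AC *)
Definition Hpo (R : realType) (A B C : finType) (a : R) (p : B -> R)
  (rhob : B -> Op R (A * C)%type) : \bar R :=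
  ((a / (1 - a))%:E *
   log2e (\sum_(b : B) (p b)%:E * pow2e (((1 - a) / a)%:E * Hdown a (rhob b))))%E.

Definition rhoABC (R : realType) (A B C : finType) (p : B -> R)
  (rhob : B -> Op R (A * C)%type) : Op R (A * (B * C))%type :=
  opE (fun u v : (A * (B * C))%type =>
         (u.2.1 == v.2.1)%:R * ((p u.2.1)%:C)%C *
         ent (rhob u.2.1) (u.1, u.2.2) (v.1, v.2.2)).

Definition sigmaBC (R : realType) (A B C : finType) (q : B -> R)
  (rhob : B -> Op R (A * C)%type) : Op R (B * C)%type :=
  opE (fun u v : (B * C)%type =>
         (u.1 == v.1)%:R * ((q u.1)%:C)%C * ent (ptr1 (rhob u.1)) u.2 v.2).

(* Both rho_ABC and I_A (x) sigma_BC are block diagonal in the classical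
   register B, with blocks p_b rho^|b_AC and q_b (I_A (x) rho^|b_C).  Real
   powers of normal operators act blockwise and (c X)^s = c^s X^s for c >= 0, so
   with s = (1 - a) / (2 a) the sandwiched trace splits as
     tr[(sigma^s rho sigma^s)^a] = sum_b p_b^a q_b^(1-a) Q_b,
   where Q_b is the sandwiched trace of rho^|b_AC against I_A (x) rho^|b_C, so
   that H^down_a(A|C)_rho^|b = - log Q_b / (a - 1).  Since rho^|b_AC is always
   supported in I_A (x) rho^|b_C, the support condition says supp p <= supp q.
   With w_b = p_b Q_b^(1/a), Jensen's inequality for t |-> t^a gives
   sum_b q_b^(1-a) w_b^a >= (sum_b w_b)^a, with equality at q = w / sum_b w_b,
   so the supremum of - D_a is a / (1 - a) log sum_b w_b = H_a(A|B^up C^down). *)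

From HB Require Import structures.
From mathcomp Require Import all_boot all_order all_algebra.
From mathcomp Require Import sesquilinear spectral.
From mathcomp Require Import complex.
From mathcomp Require Import classical_sets boolp reals ereal exp.
From mathcomp Require Import ring lra.

Set Implicit Arguments.
Unset Strict Implicit.
Unset Printing Implicit Defensive.

Import Order.TTheory GRing.Theory Num.Theory.
Local Open Scope complex_scope.
Local Open Scope ring_scope.
Local Open Scope sesquilinear_scope.

Lemma sum_delta (R : pzSemiRingType) (I : finType) (F : I -> R) j :
  \sum_i (i == j)%:R * F i = F j.
Proof.
rewrite (bigD1 j) //= eqxx mul1r big1 ?addr0 // => i /negbTE ->.
by rewrite mul0r.
Qed.

Lemma sum_delta_sym (R : pzSemiRingType) (I : finType) (F : I -> R) j :
  \sum_i (j == i)%:R * F i = F j.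
Proof. by rewrite -[RHS](sum_delta F); apply: eq_bigr => i _; rewrite eq_sym. Qed.

Lemma sum_pair (R : nmodType) (I J : finType) (F : I * J -> R) :
  \sum_u F u = \sum_i \sum_j F (i, j).
Proof. by rewrite pair_bigA; apply: eq_bigr => -[]. Qed.

Lemma sum_pair_delta (R : pzSemiRingType) (I J : finType) (F : I * J -> R) i :
  \sum_u (u.1 == i)%:R * F u = \sum_j F (i, j).
Proof.
rewrite sum_pair -[RHS](sum_delta (fun i' => \sum_j F (i', j)) i).
by apply: eq_bigr => i' _; rewrite mulr_sumr.
Qed.

Lemma Re_realM (R : realType) (c : R) (z : R[i]) :
  complex.Re (c%:C * z) = c * complex.Re z.
Proof. by case: z => x y; rewrite /= mul0r subr0. Qed.

Lemma submx_diag_mx (F : fieldType) m n (M : 'M[F]_(m, n)) (v : 'rV[F]_n) :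
  (M <= diag_mx v)%MS <-> (forall i k, v 0 k = 0 -> M i k = 0).
Proof.
split=> [/submxP[D ->] i k vk0|Mv0]; first by rewrite mul_mx_diag mxE vk0 mulr0.
have -> : M = M *m diag_mx (map_mx GRing.inv v) *m diag_mx v.
  apply/matrixP => i k; rewrite !mul_mx_diag !mxE.
  have [vk0|vk0] := eqVneq (v 0 k) 0; first by rewrite Mv0 // vk0 !mulr0.
  by rewrite -mulrA mulVf // mulr1.
exact: submxMl.
Qed.

Section SpectralCalculus.
Variables (C : numClosedFieldType) (n : nat).
Implicit Types (M X W : 'M[C]_n) (d v : 'rV[C]_n).

Lemma diag_mx_map_comm M d v (g : C -> C) :
  diag_mx d *m M = M *m diag_mx v ->
  diag_mx (map_mx g d) *m M = M *m diag_mx (map_mx g v).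
Proof.
move=> dMv; apply/matrixP => i j; have := congr1 (fun N : 'M_n => N i j) dMv.
rewrite !mul_diag_mx !mul_mx_diag !mxE.
have [->|Mij] := eqVneq (M i j) 0; first by rewrite !mulr0 !mul0r.
move=> dMvij; have -> : d 0 i = v 0 j by apply: (mulIf Mij); rewrite dMvij mulrC.
by rewrite mulrC.
Qed.

Lemma spectral_calculus_unitary X W v (g : C -> C) :
  W \is unitarymx -> X = invmx W *m diag_mx v *m W ->
  invmx (spectralmx X) *m diag_mx (map_mx g (spectral_diag X)) *m spectralmx X
  = invmx W *m diag_mx (map_mx g v) *m W.
Proof.
move=> Wu decX.
have nX : X \is normalmx by apply/orthomx_spectral_subproof; exists (W, v).
have specX := orthomx_spectralP nX.
set P := spectralmx X in specX *; set d := spectral_diag X in specX *.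
have Pu : P \in unitmx by apply: spectral_unit.
have Wi : W \in unitmx by apply: unitarymx_unit.
set M := P *m invmx W.
have dMv : diag_mx d *m M = M *m diag_mx v.
  have := congr1 (fun Y => P *m Y *m invmx W) decX.
  rewrite {1}specX /M !mulmxA mulmxV // mul1mx -!mulmxA mulmxV // mulmx1.
  by rewrite !mulmxA.
have gdP : diag_mx (map_mx g d) *m P = M *m diag_mx (map_mx g v) *m W.
  by rewrite -(diag_mx_map_comm g dMv) -mulmxA /M mulmxKV.
by rewrite -mulmxA gdP !mulmxA /M (mulVmx Pu) mul1mx.
Qed.

Lemma normal_spectralE X : X \is normalmx ->
  X = (spectralmx X)^t* *m diag_mx (spectral_diag X) *m spectralmx X.
Proof. by move/orthomx_spectralP; rewrite invmx_unitary ?spectral_unitarymx. Qed.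

End SpectralCalculus.

Section OperatorEntries.
Variables (R : realType) (T : finType).
Implicit Types (X Y W : Op R T) (e f : T -> R[i]).

Lemma ent_opE (g : T -> T -> R[i]) x y : ent (opE g) x y = g x y.
Proof. by rewrite /ent /opE mxE !enum_rankK. Qed.

Lemma op_ext X Y : (forall x y, ent X x y = ent Y x y) -> X = Y.
Proof.
move=> eqXY; apply/matrixP => i j.
by have := eqXY (enum_val i) (enum_val j); rewrite /ent !enum_valK.
Qed.

Lemma sum_enum_rank (F : 'I_#|T| -> R[i]) : \sum_i F i = \sum_x F (enum_rank x).
Proof.
rewrite (reindex (@enum_rank T)) //; exists (@enum_val T T) => x _.
  exact: enum_rankK.
exact: enum_valK.
Qed.

Lemma ent_mulmx X Y x z : ent (X *m Y) x z = \sum_y ent X x y * ent Y y z.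
Proof. by rewrite /ent mxE sum_enum_rank. Qed.

Lemma mxtrace_ent X : \tr X = \sum_x ent X x x.
Proof. by rewrite /mxtrace sum_enum_rank. Qed.

Lemma ent_trmxC X x y : ent (X^t*) x y = (ent X y x)^*.
Proof. by rewrite /ent !mxE. Qed.

Lemma ent1 x y : ent (1%:M : Op R T) x y = (x == y)%:R.
Proof. by rewrite /ent mxE (inj_eq (@enum_rank_inj T)). Qed.

Lemma ent_scalemx c X x y : ent (c *: X) x y = c * ent X x y.
Proof. by rewrite /ent mxE. Qed.

Lemma mxtrace_unitary_conj W X : W \is unitarymx -> \tr (W^t* *m X *m W) = \tr X.
Proof. by move=> /unitarymxP Wu; rewrite mxtrace_mulC mulmxA Wu mul1mx. Qed.

Lemma mxtrace_unitary_sandwich W G X : W \is unitarymx ->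
  \tr (W^t* *m G *m W *m X *m (W^t* *m G *m W)) = \tr (G *m (W *m X *m W^t*) *m G).
Proof. by move=> Wu; rewrite -[RHS](mxtrace_unitary_conj _ Wu) !mulmxA. Qed.

Definition diag_op e : Op R T := opE (fun x y => (x == y)%:R * e x).

Lemma ent_diag_op e x y : ent (diag_op e) x y = (x == y)%:R * e x.
Proof. exact: ent_opE. Qed.

Lemma diag_op_mx e : diag_op e = diag_mx (\row_j e (enum_val j)).
Proof.
apply: op_ext => x y; rewrite ent_diag_op /ent !mxE enum_rankK.
by rewrite (inj_eq (@enum_rank_inj T)) mulrC mulr_natr.
Qed.

Lemma ent_diag_mulmx e X x y : ent (diag_op e *m X) x y = e x * ent X x y.
Proof.
rewrite ent_mulmx -[RHS](sum_delta_sym (fun z => e z * ent X z y) x).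
apply: eq_bigr => z _; rewrite ent_diag_op.
by case: eqP => [->|_]; rewrite ?mul1r ?mul0r.
Qed.

Lemma ent_mulmx_diag e X x y : ent (X *m diag_op e) x y = ent X x y * e y.
Proof.
rewrite ent_mulmx -[RHS](sum_delta (fun z => ent X x z * e z) y).
by apply: eq_bigr => z _; rewrite ent_diag_op; ring.
Qed.

Lemma mxtrace_diag_op e : \tr (diag_op e) = \sum_x e x.
Proof.
by rewrite mxtrace_ent; apply: eq_bigr => x _; rewrite ent_diag_op eqxx mul1r.
Qed.

Lemma trmxC_diag_op e : (diag_op e)^t* = diag_op (fun x => (e x)^*).
Proof.
apply: op_ext => x y; rewrite ent_trmxC !ent_diag_op eq_sym.
by case: eqP => [->|]; rewrite ?mul1r ?mul0r ?conjC0.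
Qed.

Lemma scale_diag_op c e : c *: diag_op e = diag_op (fun x => c * e x).
Proof. by apply: op_ext => x y; rewrite ent_scalemx !ent_diag_op; ring. Qed.

End OperatorEntries.

Section PositiveOperators.
Variables (R : realType) (T : finType).
Implicit Types (X Y W : Op R T) (e f : T -> R[i]).

Definition qform X f := \sum_x \sum_y f x * ent X x y * (f y)^*.

Lemma qform_mx X (u : 'rV_#|T|) :
  (u *m X *m u^t*) 0 0 = qform X (fun x => u 0 (enum_rank x)).
Proof.
rewrite /qform mxE sum_enum_rank exchange_big /=; apply: eq_bigr => y _.
by rewrite !mxE sum_enum_rank big_distrl.
Qed.

Lemma qform_delta X k : qform X (fun x => (x == k)%:R) = ent X k k.
Proof.
rewrite /qform -[RHS](sum_delta (fun x => ent X x k) k); apply: eq_bigr => x _.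
rewrite -[in RHS](sum_delta (fun y => ent X x y) k) big_distrr /=.
by apply: eq_bigr => y _; rewrite rmorph_nat; ring.
Qed.

Lemma qform_conj Y X f :
  qform (Y *m X *m Y^t*) f = qform X (fun y => \sum_x f x * ent Y x y).
Proof.
pose u : 'rV_#|T| := \row_j f (enum_val j).
have -> : f = fun x => u 0 (enum_rank x) by apply: funext => x; rewrite mxE enum_rankK.
rewrite -qform_mx.
have -> : u *m (Y *m X *m Y^t*) *m u^t* = (u *m Y) *m X *m (u *m Y)^t*.
  by rewrite trmx_mul map_mxM !mulmxA.
rewrite qform_mx; congr qform; apply: funext => y.
by rewrite !mxE sum_enum_rank.
Qed.

Lemma hermsymmxE X : (X \is hermsymmx) = (X^t* == X).
Proof.
by apply/is_hermitianmxP/eqP; rewrite expr0 scale1r => /esym.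
Qed.

Lemma psdmxP X : psdmx X <-> X^t* = X /\ forall f, 0 <= qform X f.
Proof.
rewrite /psdmx hermsymmxE; split=> [[/eqP hermX psdX]|[hermX psdX]].
  split=> // f; have := psdX (\row_j f (enum_val j)); rewrite qform_mx.
  by congr (0 <= qform _ _); apply: funext => x; rewrite mxE enum_rankK.
by split=> [|u]; [apply/eqP | rewrite qform_mx].
Qed.

Lemma psdmx_herm X : psdmx X -> X^t* = X.
Proof. by case/psdmxP. Qed.

Lemma psdmx_qform X f : psdmx X -> 0 <= qform X f.
Proof. by case/psdmxP=> _; apply. Qed.

Lemma psdmx_normal X : psdmx X -> X \is normalmx.
Proof. by case=> hermX _; apply: hermitian_normalmx. Qed.

Lemma ent_conj_diag W X k : ent (W *m X *m W^t*) k k = qform X (ent W k).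
Proof.
rewrite -qform_delta qform_conj; congr qform; apply: funext => y.
exact: sum_delta.
Qed.

Lemma psdmx_conj Y X : psdmx X -> psdmx (Y *m X *m Y^t*).
Proof.
move=> psdX; apply/psdmxP; split; last by move=> f; rewrite qform_conj psdmx_qform.
by rewrite !trmx_mul !map_mxM trmxCK (psdmx_herm psdX) -mulmxA.
Qed.

Lemma qform_scale c X f : qform (c *: X) f = c * qform X f.
Proof.
rewrite /qform mulr_sumr; apply: eq_bigr => x _; rewrite mulr_sumr.
by apply: eq_bigr => y _; rewrite ent_scalemx; ring.
Qed.

Lemma psdmx_scale c X : 0 <= c -> psdmx X -> psdmx (c *: X).
Proof.
move=> c0 /psdmxP[hermX psdX]; apply/psdmxP; split.
  by rewrite linearZ /= map_mxZ /= geC0_conj // hermX.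
by move=> f; rewrite qform_scale mulr_ge0.
Qed.

Lemma qform_diag_op e f : qform (diag_op e) f = \sum_x e x * (f x * (f x)^*).
Proof.
apply: eq_bigr => x _.
rewrite (eq_bigr (fun y => (x == y)%:R * (f x * e x * (f y)^*))) ?sum_delta_sym.
  by ring.
by move=> y _; rewrite ent_diag_op; ring.
Qed.

Lemma psdmx_unitary_diag W e : (forall x, 0 <= e x) -> psdmx (W^t* *m diag_op e *m W).
Proof.
move=> e_ge0; rewrite -[X in _ *m X]trmxCK; apply: psdmx_conj; apply/psdmxP; split.
  by rewrite trmxC_diag_op; congr diag_op; apply: funext => x; rewrite geC0_conj.
by move=> f; rewrite qform_diag_op sumr_ge0 // => x _; rewrite mulr_ge0 ?mul_conjC_ge0.
Qed.

Definition eigenval X : T -> R[i] := fun x => spectral_diag X 0 (enum_rank x).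

Lemma normal_spectral_op X : X \is normalmx ->
  X = (spectralmx X)^t* *m diag_op (eigenval X) *m spectralmx X.
Proof.
move=> nX; have -> : diag_op (eigenval X) = diag_mx (spectral_diag X).
  by rewrite diag_op_mx; apply/matrixP => i j; rewrite !mxE /eigenval enum_valK.
exact: normal_spectralE.
Qed.

Lemma eigenval_ge0 X x : psdmx X -> 0 <= eigenval X x.
Proof.
move=> psdX; have decX := normal_spectral_op (psdmx_normal psdX).
have Vu := spectral_unitarymx X; set V := spectralmx X in decX Vu *.
have := ent_conj_diag V X x; rewrite {1}decX !mulmxA (unitarymxP Vu) mul1mx mulmxtVK //.
by rewrite ent_diag_op eqxx mul1r => ->; apply: psdmx_qform.
Qed.

Lemma psdmx_qform_eq0 X f : psdmx X -> qform X f = 0 ->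
  forall y, \sum_x f x * ent X x y = 0.
Proof.
move=> psdX fX0 y; have := normal_spectral_op (psdmx_normal psdX).
set V := spectralmx X; set d := eigenval X => decX.
pose g k := \sum_x f x * ent (V^t*) x k.
have dg0 k : d k * g k = 0.
  have : qform X f = \sum_k d k * (g k * (g k)^*).
    by rewrite decX -[X in _ *m X]trmxCK qform_conj qform_diag_op.
  rewrite fX0 => /esym/eqP; rewrite psumr_eq0 => [/allP/(_ k (mem_index_enum _))|j _].
    by rewrite mulf_eq0 mul_conjC_eq0 => /orP[]/eqP->; rewrite ?mul0r ?mulr0.
  by rewrite mulr_ge0 ?mul_conjC_ge0 ?eigenval_ge0.
transitivity (\sum_k d k * g k * ent V k y); last first.
  by rewrite big1 // => k _; rewrite dg0 mul0r.
rewrite {1}decX; under eq_bigr do rewrite ent_mulmx big_distrr /=.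
rewrite exchange_big; apply: eq_bigr => k _ /=; rewrite /g mulr_sumr mulr_suml.
by apply: eq_bigr => x _ /=; rewrite ent_mulmx_diag; ring.
Qed.

End PositiveOperators.

Section OperatorPowers.
Variables (R : realType) (T : finType).
Implicit Types (X Y W : Op R T) (e f : T -> R[i]).

Definition powRe (s : R) (z : R[i]) : R[i] := (powR (complex.Re z) s)%:C.

Lemma powRe_ge0 s z : 0 <= powRe s z.
Proof. by rewrite /powRe ler0c powR_ge0. Qed.

Lemma powRe_gt0 s z : 0 <= z -> z != 0 -> 0 < powRe s z.
Proof.
case: z => x y; rewrite lecE /= => /andP[/eqP-> x0] z0.
rewrite /powRe ltcE /= eqxx powR_gt0 // lt_def x0 andbT.
by apply: contra z0 => /eqP->.
Qed.

Lemma powReM s (c : R) z : 0 <= c -> 0 <= z ->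
  powRe s (c%:C * z) = (powR c s)%:C * powRe s z.
Proof.
move=> c0; case: z => x y; rewrite lecE /= => /andP[/eqP-> x0].
by rewrite /powRe /= !mul0r subr0 powRM // rmorphM.
Qed.

Lemma mxpowR_unitary_diag X W e s : W \is unitarymx ->
  X = W^t* *m diag_op e *m W ->
  mxpowR X s = W^t* *m diag_op (fun x => powRe s (e x)) *m W.
Proof.
move=> Wu decX.
have decX' : X = invmx W *m diag_mx (\row_j e (enum_val j)) *m W.
  by rewrite (invmx_unitary Wu) -diag_op_mx.
have := spectral_calculus_unitary (powRe s) Wu decX'.
rewrite (invmx_unitary Wu) => calc; apply: etrans calc _; rewrite diag_op_mx.
by apply: (congr1 (fun v => W^t* *m diag_mx v *m W)); apply/rowP => j; rewrite !mxE.
Qed.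

Lemma psdmx_mxpowR X s : X \is normalmx -> psdmx (mxpowR X s).
Proof.
move=> nX.
rewrite (mxpowR_unitary_diag s (spectral_unitarymx X) (normal_spectral_op nX)).
by apply: psdmx_unitary_diag => x; apply: powRe_ge0.
Qed.

Lemma mxtrace_mxpowR X s : X \is normalmx ->
  \tr (mxpowR X s) = \sum_x powRe s (eigenval X x).
Proof.
move=> nX.
rewrite (mxpowR_unitary_diag s (spectral_unitarymx X) (normal_spectral_op nX)).
by rewrite mxtrace_unitary_conj ?spectral_unitarymx // mxtrace_diag_op.
Qed.

Lemma mxtrace_mxpowR_gt0 X s : psdmx X -> \tr X != 0 ->
  0 < complex.Re (\tr (mxpowR X s)).
Proof.
move=> psdX; have nX := psdmx_normal psdX.
rewrite {1}(normal_spectral_op nX) mxtrace_unitary_conj ?spectral_unitarymx //.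
rewrite mxtrace_diag_op psumr_neq0 => [/hasP[x _ /= eig_gt0]|x _]; last first.
  exact: eigenval_ge0.
rewrite mxtrace_mxpowR // raddf_sum (bigD1 x) //= ltr_pwDl ?powR_gt0 //.
  by move: eig_gt0; rewrite ltcE => /andP[].
by rewrite sumr_ge0 // => y _; rewrite powR_ge0.
Qed.

Lemma mxpowR_scale X (c s : R) : 0 <= c -> psdmx X ->
  mxpowR (c%:C *: X) s = (powR c s)%:C *: mxpowR X s.
Proof.
move=> c0 psdX; have decX := normal_spectral_op (psdmx_normal psdX).
have Vu := spectral_unitarymx X; set V := spectralmx X in decX Vu *.
have decCX : c%:C *: X = V^t* *m diag_op (fun x => c%:C * eigenval X x) *m V.
  by rewrite {1}decX scalemxAl scalemxAr scale_diag_op.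
rewrite (mxpowR_unitary_diag s Vu decX) (mxpowR_unitary_diag s Vu decCX).
rewrite scalemxAl scalemxAr scale_diag_op.
apply: (congr1 (fun e => V^t* *m diag_op e *m V)); apply: funext => x.
by rewrite powReM ?eigenval_ge0 ?ler0c.
Qed.

End OperatorPowers.

Section Supports.
Variables (R : realType) (T : finType).
Implicit Types (X Y W : Op R T) (e f : T -> R[i]).

Lemma supp_sub_unitary_diag X W e : W \is unitarymx ->
  supp_sub X (W^t* *m diag_op e *m W) <->
  forall k y, e k = 0 -> ent (W *m X) k y = 0.
Proof.
move=> Wu; have Wtu : W^T \in unitmx by rewrite unitmx_tr unitarymx_unit.
have WWt : (W^t*)^T *m W^T = 1%:M by rewrite -trmx_mul (unitarymxP Wu) trmx1.
rewrite /supp_sub -(submxMfree _ _ (_ : row_free W^T)) ?row_free_unit //.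
rewrite !trmx_mul -!mulmxA WWt mulmx1.
rewrite (eqmxMfull _ (_ : row_full W^T)) ?row_full_unit //.
rewrite -trmx_mul diag_op_mx tr_diag_mx submx_diag_mx.
split=> [Wv0 k y ek0|We0 i k].
  by have := Wv0 (enum_rank y) (enum_rank k); rewrite mxE enum_rankK mxE => /(_ ek0).
by rewrite mxE => ek0; have := We0 _ (enum_val i) ek0; rewrite mxE /ent !enum_valK.
Qed.

Lemma supp_sub_scale X Y (c c' : R[i]) : X != 0 -> supp_sub X Y ->
  supp_sub (c *: X) (c' *: Y) = (c != 0) ==> (c' != 0).
Proof.
move=> X0 XY; rewrite /supp_sub !linearZ /=.
have [->|c0] := eqVneq c 0; first by rewrite scale0r sub0mx.
have [->|c'0] := eqVneq c' 0.
  by rewrite scale0r submx0 scaler_eq0 (negbTE c0) trmx_eq0 (negbTE X0).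
by rewrite (eqmx_scale _ c0) (eqmx_scale _ c'0).
Qed.

End Supports.

Section TensorIdentity.
Variables (R : realType) (A T : finType).
Implicit Types (Y U : Op R T) (X : Op R (A * T)%type) (e f : T -> R[i]).

Lemma ent_tensI Y u v : ent (tensI A Y) u v = (u.1 == v.1)%:R * ent Y u.2 v.2.
Proof. exact: ent_opE. Qed.

Lemma ent_tensI_mulmx U X u v :
  ent (tensI A U *m X) u v = \sum_s ent U u.2 s * ent X (u.1, s) v.
Proof.
rewrite ent_mulmx sum_pair.
rewrite -[RHS](sum_delta_sym (fun a => \sum_s ent U u.2 s * ent X (a, s) v) u.1).
apply: eq_bigr => a _; rewrite mulr_sumr.
by apply: eq_bigr => s _; rewrite ent_tensI; ring.
Qed.

Lemma ent_mulmx_tensI U X u v :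
  ent (X *m tensI A U) u v = \sum_s ent X u (v.1, s) * ent U s v.2.
Proof.
rewrite ent_mulmx sum_pair.
rewrite -[RHS](sum_delta (fun a => \sum_s ent X u (a, s) * ent U s v.2) v.1).
apply: eq_bigr => a _; rewrite mulr_sumr.
by apply: eq_bigr => s _; rewrite ent_tensI; ring.
Qed.

Lemma tensI_mulmx Y U : tensI A (Y *m U) = tensI A Y *m tensI A U.
Proof.
apply: op_ext => u v; rewrite ent_tensI_mulmx ent_tensI ent_mulmx mulr_sumr.
by apply: eq_bigr => t _; rewrite ent_tensI; ring.
Qed.

Lemma tensI_trmxC Y : (tensI A Y)^t* = tensI A (Y^t*).
Proof.
apply: op_ext => u v; rewrite ent_trmxC !ent_tensI ent_trmxC rmorphM rmorph_nat.
by rewrite eq_sym.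
Qed.

Lemma tensI1 : tensI A (1%:M : Op R T) = 1%:M.
Proof.
apply: op_ext => -[a t] [a' t']; rewrite ent_tensI !ent1 /= xpair_eqE.
by case: (a == a'); rewrite ?mul1r ?mul0r.
Qed.

Lemma tensI_diag_op e : tensI A (diag_op e) = diag_op (fun u : A * T => e u.2).
Proof.
apply: op_ext => -[a t] [a' t']; rewrite ent_tensI !ent_diag_op /= xpair_eqE.
by case: (a == a'); rewrite ?mul1r ?mul0r.
Qed.

Lemma tensI_unitary U : U \is unitarymx -> tensI A U \is unitarymx.
Proof.
by move=> /unitarymxP Uu; apply/unitarymxP; rewrite tensI_trmxC -tensI_mulmx Uu tensI1.
Qed.

Lemma ent_ptr1 X t t' : ent (ptr1 X) t t' = \sum_a ent X (a, t) (a, t').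
Proof. exact: ent_opE. Qed.

Lemma ptr1_conj_tensI U X :
  ptr1 (tensI A U *m X *m (tensI A U)^t*) = U *m ptr1 X *m U^t*.
Proof.
apply: op_ext => t t'; rewrite ent_ptr1 ent_mulmx.
under eq_bigr do rewrite tensI_trmxC ent_mulmx_tensI /=.
rewrite exchange_big; apply: eq_bigr => s' _ /=; rewrite ent_mulmx mulr_suml.
under eq_bigr do rewrite ent_tensI_mulmx mulr_suml /=.
rewrite exchange_big; apply: eq_bigr => s _ /=.
by rewrite ent_ptr1 mulr_sumr mulr_suml.
Qed.

Lemma ptr1_trmxC X : (ptr1 X)^t* = ptr1 (X^t*).
Proof.
apply: op_ext => t t'; rewrite ent_trmxC !ent_ptr1 rmorph_sum.
by apply: eq_bigr => a _; rewrite ent_trmxC.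
Qed.

Lemma qform_ptr1 X f :
  qform (ptr1 X) f = \sum_a qform X (fun u => (u.1 == a)%:R * f u.2).
Proof.
have qform_a a : qform X (fun u => (u.1 == a)%:R * f u.2) =
    \sum_t \sum_t' f t * ent X (a, t) (a, t') * (f t')^*.
  rewrite /qform.
  rewrite -(sum_pair_delta (fun u => \sum_t' f u.2 * ent X u (a, t') * (f t')^*)).
  apply: eq_bigr => u _.
  rewrite (eq_bigr (fun v =>
    (v.1 == a)%:R * ((u.1 == a)%:R * (f u.2 * ent X u v * (f v.2)^*)))).
    by rewrite sum_pair_delta -mulr_sumr.
  by move=> v _; rewrite rmorphM rmorph_nat; ring.
rewrite (eq_bigr _ (fun a _ => qform_a a)) /qform [RHS]exchange_big.
apply: eq_bigr => t _; rewrite [RHS]exchange_big; apply: eq_bigr => t' _.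
by rewrite ent_ptr1 mulr_sumr mulr_suml.
Qed.

Lemma psdmx_ptr1 X : psdmx X -> psdmx (ptr1 X).
Proof.
move=> psdX; apply/psdmxP; split; first by rewrite ptr1_trmxC psdmx_herm.
by move=> f; rewrite qform_ptr1 sumr_ge0 // => a _; apply: psdmx_qform.
Qed.

End TensorIdentity.

Definition blockdiag (R : realType) (A B C : finType) (F : B -> Op R (A * C)%type)
  : Op R (A * (B * C))%type :=
  opE (fun u v : A * (B * C) =>
    (u.2.1 == v.2.1)%:R * ent (F u.2.1) (u.1, u.2.2) (v.1, v.2.2)).

Section BlockDiagonal.
Variables (R : realType) (A B C : finType).
Implicit Types (F G W : B -> Op R (A * C)%type) (e : B -> A * C -> R[i]).

Lemma ent_blockdiag F u v :
  ent (blockdiag F) u v = (u.2.1 == v.2.1)%:R * ent (F u.2.1) (u.1, u.2.2) (v.1, v.2.2).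
Proof. exact: ent_opE. Qed.

Lemma sum_blockdiag_index (H : A * (B * C) -> R[i]) :
  \sum_u H u = \sum_b \sum_(s : A * C) H (s.1, (b, s.2)).
Proof.
rewrite sum_pair; under eq_bigr do rewrite sum_pair.
by rewrite exchange_big; apply: eq_bigr => b _; rewrite sum_pair.
Qed.

Lemma ent_blockdiag_mulmx F X u w :
  ent (blockdiag F *m X) u w =
  \sum_s ent (F u.2.1) (u.1, u.2.2) s * ent X (s.1, (u.2.1, s.2)) w.
Proof.
rewrite ent_mulmx sum_blockdiag_index.
rewrite -[RHS](sum_delta_sym (fun b => \sum_s ent (F u.2.1) (u.1, u.2.2) s *
  ent X (s.1, (b, s.2)) w) u.2.1).
apply: eq_bigr => b _; rewrite mulr_sumr; apply: eq_bigr => s _.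
rewrite ent_blockdiag /= -surjective_pairing.
by case: eqP => [->|_]; rewrite ?mul1r ?mul0r ?mulrA.
Qed.

Lemma blockdiag_mulmx F G :
  blockdiag F *m blockdiag G = blockdiag (fun b => F b *m G b).
Proof.
apply: op_ext => u w; rewrite ent_blockdiag_mulmx ent_blockdiag ent_mulmx mulr_sumr.
by apply: eq_bigr => s _; rewrite ent_blockdiag /= -surjective_pairing; ring.
Qed.

Lemma blockdiag_trmxC F : (blockdiag F)^t* = blockdiag (fun b => (F b)^t*).
Proof.
apply: op_ext => u v; rewrite ent_trmxC !ent_blockdiag ent_trmxC rmorphM rmorph_nat.
by rewrite eq_sym; case: eqP => [->|_]; rewrite ?mul0r.
Qed.

Lemma blockdiag1 :
  blockdiag (fun=> 1%:M : Op R (A * C)%type) = 1%:M :> Op R (A * (B * C))%type.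
Proof.
apply: op_ext => -[a [b c]] [a' [b' c']]; rewrite ent_blockdiag !ent1 /= !xpair_eqE.
by case: (b == b'); rewrite ?mul1r ?mul0r ?andbF.
Qed.

Lemma blockdiag_diag_op e :
  blockdiag (fun b => diag_op (e b)) = diag_op (fun u => e u.2.1 (u.1, u.2.2)).
Proof.
apply: op_ext => -[a [b c]] [a' [b' c']].
rewrite ent_blockdiag !ent_diag_op /= !xpair_eqE.
by case: (b == b'); rewrite /= ?andbF ?mul1r ?mul0r.
Qed.

Lemma blockdiag_unitary W : (forall b, W b \is unitarymx) -> blockdiag W \is unitarymx.
Proof.
move=> Wu; apply/unitarymxP; rewrite blockdiag_trmxC blockdiag_mulmx -blockdiag1.
by congr blockdiag; apply: funext => b; apply/unitarymxP.
Qed.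

Lemma mxtrace_blockdiag F : \tr (blockdiag F) = \sum_b \tr (F b).
Proof.
rewrite mxtrace_ent sum_blockdiag_index; apply: eq_bigr => b _; rewrite mxtrace_ent.
by apply: eq_bigr => s _; rewrite ent_blockdiag /= eqxx mul1r -surjective_pairing.
Qed.

Lemma blockdiag_unitary_diag W e :
  blockdiag (fun b => (W b)^t* *m diag_op (e b) *m W b) =
  (blockdiag W)^t* *m diag_op (fun u => e u.2.1 (u.1, u.2.2)) *m blockdiag W.
Proof. by rewrite blockdiag_trmxC -blockdiag_diag_op !blockdiag_mulmx. Qed.

Lemma blockdiag_spectral G : (forall b, G b \is normalmx) ->
  G = fun b => (spectralmx (G b))^t* *m diag_op (eigenval (G b)) *m spectralmx (G b).
Proof. by move=> nG; apply: funext => b; apply: normal_spectral_op. Qed.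

Lemma mxpowR_blockdiag F s : (forall b, F b \is normalmx) ->
  mxpowR (blockdiag F) s = blockdiag (fun b => mxpowR (F b) s).
Proof.
move=> nF; have Vu b := spectral_unitarymx (F b).
set V := fun b => spectralmx (F b); set d := fun b => eigenval (F b).
have decF : blockdiag F =
    (blockdiag V)^t* *m diag_op (fun u => d u.2.1 (u.1, u.2.2)) *m blockdiag V.
  by rewrite -blockdiag_unitary_diag {1}(blockdiag_spectral nF).
rewrite (mxpowR_unitary_diag s (blockdiag_unitary Vu) decF).
have -> : (fun b => mxpowR (F b) s) =
    fun b => (V b)^t* *m diag_op (fun x => powRe s (d b x)) *m V b.
  by apply: funext => b; apply: mxpowR_unitary_diag (Vu b) (normal_spectral_op (nF b)).
by rewrite blockdiag_unitary_diag.
Qed.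

Lemma supp_sub_blockdiag F G : (forall b, G b \is normalmx) ->
  supp_sub (blockdiag F) (blockdiag G) <-> forall b, supp_sub (F b) (G b).
Proof.
move=> nG; have Vu b := spectral_unitarymx (G b).
rewrite (blockdiag_spectral nG) blockdiag_unitary_diag.
rewrite (supp_sub_unitary_diag _ _ (blockdiag_unitary Vu)) blockdiag_mulmx.
split=> [rows0 b|rows0 k y ek0].
  apply/(supp_sub_unitary_diag _ _ (Vu b)) => k y ek0.
  have := rows0 (k.1, (b, k.2)) (y.1, (b, y.2)).
  by rewrite ent_blockdiag /= eqxx mul1r -!surjective_pairing; apply.
rewrite ent_blockdiag; case: eqP => _; rewrite ?mul0r // mul1r.
by move/(supp_sub_unitary_diag _ _ (Vu k.2.1)): (rows0 k.2.1); apply.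
Qed.

End BlockDiagonal.

Definition sandwich (R : realType) (T : finType) (s : R) (sig rho : Op R T) : Op R T :=
  mxpowR sig s *m rho *m mxpowR sig s.

Definition sandwiched_trace (R : realType) (T : finType) (a : R) (rho sig : Op R T)
  : R :=
  complex.Re (\tr (mxpowR (sandwich ((1 - a) / (2 * a)) sig rho) a)).

Lemma DalphaE (R : realType) (T : finType) (a : R) (rho sig : Op R T) :
  Dalpha a rho sig =
  if supp_sub rho sig
  then ((a - 1)^-1 * log2 (sandwiched_trace a rho sig / complex.Re (\tr rho)))%:E
  else +oo%E.
Proof. by []. Qed.

Lemma psdmx_sandwich (R : realType) (T : finType) (s : R) (sig rho : Op R T) :
  sig \is normalmx -> psdmx rho -> psdmx (sandwich s sig rho).
Proof.
move=> nsig psdrho; rewrite /sandwich -{2}(psdmx_herm (psdmx_mxpowR s nsig)).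
exact: psdmx_conj.
Qed.

Section MarginalFrame.
Variables (R : realType) (A C : finType) (H : Op R (A * C)%type).
Hypothesis psdH : psdmx H.

Let V := spectralmx (ptr1 H).
Let d := eigenval (ptr1 H).
Let W := tensI A V.
Let Hr := W *m H *m W^t*.

Let Vu : V \is unitarymx. Proof. exact: spectral_unitarymx. Qed.
Let Wu : W \is unitarymx. Proof. exact: tensI_unitary. Qed.
Let decHC : ptr1 H = V^t* *m diag_op d *m V.
Proof. exact/normal_spectral_op/psdmx_normal/psdmx_ptr1. Qed.

Lemma tensI_ptr1_spectral : tensI A (ptr1 H) = W^t* *m diag_op (fun u => d u.2) *m W.
Proof. by rewrite {1}decHC !tensI_mulmx tensI_trmxC tensI_diag_op. Qed.

Lemma psdmx_tensI_ptr1 : psdmx (tensI A (ptr1 H)).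
Proof.
rewrite tensI_ptr1_spectral; apply: psdmx_unitary_diag => u.
exact/eigenval_ge0/psdmx_ptr1.
Qed.

Let frame_diag_ge0 k : 0 <= ent Hr k k.
Proof. by rewrite ent_conj_diag psdmx_qform. Qed.

(* Summed over A, the diagonal of H in the eigenbasis of I_A (x) ptr1 H is the
   spectrum of ptr1 H. *)
Let frame_diag_eq0 k : d k.2 = 0 -> ent Hr k k = 0.
Proof.
case: k => a c /= dc0.
have : \sum_a' ent Hr (a', c) (a', c) = d c.
  rewrite -ent_ptr1 ptr1_conj_tensI {1}decHC !mulmxA (unitarymxP Vu) mul1mx mulmxtVK //.
  by rewrite ent_diag_op eqxx mul1r.
rewrite dc0 => /eqP; rewrite psumr_eq0 => [/allP/(_ a (mem_index_enum _))/eqP //|a' _].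
exact: frame_diag_ge0.
Qed.

Lemma supp_sub_tensI_ptr1 : supp_sub H (tensI A (ptr1 H)).
Proof.
rewrite tensI_ptr1_spectral; apply/(supp_sub_unitary_diag _ _ Wu) => k y dk0.
by rewrite ent_mulmx (psdmx_qform_eq0 psdH) // -ent_conj_diag frame_diag_eq0.
Qed.

Lemma mxtrace_sandwich_tensI_ptr1_neq0 s :
  \tr H != 0 -> \tr (sandwich s (tensI A (ptr1 H)) H) != 0.
Proof.
move=> trH; pose g (u : A * C) := powRe s (d u.2).
have -> : \tr (sandwich s (tensI A (ptr1 H)) H) = \sum_k g k * ent Hr k k * g k.
  rewrite /sandwich (mxpowR_unitary_diag s Wu tensI_ptr1_spectral).
  rewrite mxtrace_unitary_sandwich // mxtrace_ent; apply: eq_bigr => k _.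
  by rewrite ent_mulmx_diag ent_diag_mulmx.
have : \tr Hr != 0.
  by rewrite /Hr -[X in X *m H]trmxCK mxtrace_unitary_conj ?trmxC_unitary.
rewrite mxtrace_ent !psumr_neq0 => [/hasP[k _ /= Hk_gt0]|k _|k _]; last 2 first.
- by rewrite !mulr_ge0 ?powRe_ge0.
- exact: frame_diag_ge0.
apply/hasP; exists k; rewrite ?mem_index_enum //=.
have dk0 : d k.2 != 0 by apply: contraTneq Hk_gt0 => /frame_diag_eq0->; rewrite ltxx.
have gk_gt0 : 0 < g k by apply: powRe_gt0 => //; exact/eigenval_ge0/psdmx_ptr1.
by rewrite !mulr_gt0.
Qed.

End MarginalFrame.

Lemma Hdown_sandwiched_trace (R : realType) (A C : finType) (a : R)
    (H : Op R (A * C)%type) :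
  density H ->
  Hdown a H = (- ((a - 1)^-1 * log2 (sandwiched_trace a H (tensI A (ptr1 H)))))%:E.
Proof.
by case=> psdH trH; rewrite /Hdown DalphaE supp_sub_tensI_ptr1 // trH /= divr1.
Qed.

Lemma sandwiched_trace_tensI_ptr1_gt0 (R : realType) (A C : finType) (a : R)
    (H : Op R (A * C)%type) :
  density H -> 0 < sandwiched_trace a H (tensI A (ptr1 H)).
Proof.
case=> psdH trH; apply: mxtrace_mxpowR_gt0.
  exact/psdmx_sandwich/psdH/psdmx_normal/psdmx_tensI_ptr1.
by apply: mxtrace_sandwich_tensI_ptr1_neq0 => //; rewrite trH oner_eq0.
Qed.

Section PowerInequalities.
Variable R : realType.
Implicit Types (a r t x y z : R).

Lemma powRV x r : 0 < x -> x^-1 `^ r = (x `^ r)^-1.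
Proof. by move=> x_gt0; rewrite /powR invr_eq0 gt_eqF // lnV ?posrE // mulrN expRN. Qed.

Lemma powR_bernoulli t a : 0 <= t -> 1 <= a -> 1 + a * (t - 1) <= t `^ a.
Proof.
move=> t_ge0 a_ge1; have [->|t_neq0] := eqVneq t 0.
  by rewrite powR0 ?gt_eqF ?(lt_le_trans ltr01) //; lra.
have t_gt0 : 0 < t by rewrite lt_def t_neq0.
have ln_le (u : R) : 0 < u -> ln u <= u - 1.
  by move=> u_gt0; have := @le_ln1Dx _ (u - 1); rewrite subrKC; apply; lra.
have t_ln_t : t - 1 <= t * ln t.
  have tV_gt0 : 0 < t^-1 by rewrite invr_gt0.
  have := ler_wpM2l (ltW t_gt0) (ln_le _ tV_gt0).
  by rewrite lnV ?posrE // mulrBr mulfV //; lra.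
have pow_ge : t + (a - 1) * (t * ln t) <= t `^ a.
  have := ler_wpM2l (ltW t_gt0) (ln_le _ (powR_gt0 (a - 1) t_gt0)).
  rewrite ln_powR -[t `^ a](mulr_powRB1 t_ge0) ?(lt_le_trans ltr01) //; lra.
apply: le_trans pow_ge; have := ler_wpM2l (_ : 0 <= a - 1) t_ln_t; lra.
Qed.

Lemma powR_tangent y z a : 0 <= y -> 0 < z -> 1 <= a ->
  z `^ a + a * z `^ (a - 1) * (y - z) <= y `^ a.
Proof.
move=> y_ge0 z_gt0 a_ge1; have z_neq0 : z != 0 by rewrite gt_eqF.
have -> : z `^ a + a * z `^ (a - 1) * (y - z) = z `^ a * (1 + a * (y / z - 1)).
  by rewrite -[z `^ a](mulr_powRB1 (ltW z_gt0)) ?(lt_le_trans ltr01) //; field.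
rewrite -[y in _ <= y `^ a](divfK z_neq0) powRM ?divr_ge0 ?(ltW z_gt0) // mulrC.
by rewrite ler_wpM2r ?powR_ge0 // powR_bernoulli ?divr_ge0 // ltW.
Qed.

Lemma powR_sandwich_weight a x y : 1 < a -> 0 <= x -> 0 <= y ->
  (y `^ ((1 - a) / (2 * a)) * x * y `^ ((1 - a) / (2 * a))) `^ a =
  x `^ a * y `^ (1 - a).
Proof.
move=> a_gt1 x_ge0 y_ge0; have a_neq0 : a != 0 by rewrite gt_eqF // (lt_trans ltr01).
have a1_neq0 : 1 - a != 0 by rewrite subr_eq0 eq_sym gt_eqF.
set s := (1 - a) / (2 * a).
have ss : s + s = (1 - a) / a by rewrite /s; field.
rewrite mulrC mulrA -powRD; last first.
  by rewrite ss mulf_eq0 invr_eq0 (negbTE a1_neq0) (negbTE a_neq0).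
rewrite mulrC powRM ?powR_ge0 // -powRrM ss mulfVK //.
Qed.

Variable B : finType.
Implicit Types (q w : B -> R).

(* Jensen's inequality for t |-> t ^ a with weights q, through the tangent line
   at sum_b w_b. *)
Lemma powR_sum_le a q w : 1 <= a -> prob_dist q -> (forall b, 0 <= w b) ->
  (forall b, q b = 0 -> w b = 0) ->
  (\sum_b w b) `^ a <= \sum_b q b `^ (1 - a) * w b `^ a.
Proof.
move=> a_ge1 [q_ge0 q1] w_ge0 qw0; set Z := \sum_b w b.
have a_neq0 : a != 0 by rewrite gt_eqF // (lt_le_trans ltr01).
have [Z0|Z_neq0] := eqVneq Z 0.
  by rewrite Z0 powR0 // sumr_ge0 // => b _; rewrite mulr_ge0 ?powR_ge0.
have Z_gt0 : 0 < Z by rewrite lt_def Z_neq0 sumr_ge0.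
have -> : Z `^ a = \sum_b (q b * Z `^ a + a * Z `^ (a - 1) * (w b - Z * q b)).
  rewrite big_split /= -mulr_suml q1 mul1r -mulr_sumr sumrB -mulr_sumr q1 mulr1.
  by rewrite subrr mulr0 addr0.
apply: ler_sum => b _; have [qb0|qb_neq0] := eqVneq (q b) 0.
  by rewrite qb0 (qw0 _ qb0) (powR0 a_neq0); lra.
have qb_gt0 : 0 < q b by rewrite lt_def qb_neq0 q_ge0.
have -> : q b `^ (1 - a) * w b `^ a = q b * (w b / q b) `^ a.
  rewrite powRM ?invr_ge0 ?q_ge0 // powRV // powRB ?qb_neq0 ?implybT //.
  rewrite powRr1 ?q_ge0 //.
  by field; rewrite gt_eqF ?powR_gt0.
have -> : q b * Z `^ a + a * Z `^ (a - 1) * (w b - Z * q b) =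
          q b * (Z `^ a + a * Z `^ (a - 1) * (w b / q b - Z)) by field; rewrite gt_eqF.
by rewrite ler_wpM2l // powR_tangent ?divr_ge0.
Qed.

Lemma powR_sum_normalized a w : 0 < a -> (forall b, 0 <= w b) -> 0 < \sum_b w b ->
  \sum_b (w b / \sum_b' w b') `^ (1 - a) * w b `^ a = (\sum_b w b) `^ a.
Proof.
move=> a_gt0 w_ge0 Z_gt0; set Z := \sum_b w b.
rewrite -(mulr_powRB1 (ltW Z_gt0) a_gt0) mulrC mulr_sumr; apply: eq_bigr => b _.
have [wb0|wb_neq0] := eqVneq (w b) 0; first by rewrite wb0 powR0 ?gt_eqF // !mulr0.
rewrite powRM ?invr_ge0 ?(ltW Z_gt0) // powRV // -mulrA mulrCA -powRD; last first.
  by rewrite subrK oner_eq0.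
by rewrite subrK powRr1 // -powRN opprB mulrC.
Qed.

Lemma prob_dist_normalized w : (forall b, 0 <= w b) -> 0 < \sum_b w b ->
  prob_dist (fun b => w b / \sum_b' w b').
Proof.
move=> w_ge0 Z_gt0; split=> [b|]; first exact: divr_ge0 (w_ge0 b) (ltW Z_gt0).
by rewrite -mulr_suml mulfV ?gt_eqF.
Qed.

Lemma prob_dist_wsum_gt0 q w : prob_dist q -> (forall b, 0 < w b) ->
  0 < \sum_b q b * w b.
Proof.
move=> [q_ge0 q1] w_gt0; have : \sum_b q b != 0 by rewrite q1 oner_eq0.
rewrite psumr_neq0 // => /hasP[b _ /= qb_gt0].
rewrite (bigD1 b) //= ltr_pwDl ?mulr_gt0 //.
by rewrite sumr_ge0 // => b' _; rewrite mulr_ge0 ?q_ge0 ?ltW.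
Qed.

Lemma log2_powR x a : log2 (x `^ a) = a * log2 x.
Proof. by rewrite /log2 ln_powR mulrA. Qed.

Lemma ler_log2 x y : 0 < x -> x <= y -> log2 x <= log2 y.
Proof.
move=> x_gt0 xy; rewrite /log2 ler_pM2r ?invr_gt0 ?ln_gt0 ?ltr1n //.
by rewrite ler_ln ?posrE // (lt_le_trans x_gt0).
Qed.

Lemma pow2e_log2 r x : 0 < x -> pow2e (r * log2 x)%:E = (x `^ r)%:E.
Proof.
move=> x_gt0; rewrite /pow2e /log2 -EFinM /= /powR gt_eqF //.
by congr (sequences.expR _)%:E; field; rewrite gt_eqF // ln_gt0 // ltr1n.
Qed.

Lemma log2e_EFin x : 0 < x -> log2e x%:E = (log2 x)%:E.
Proof. by move=> x_gt0; rewrite /log2e lne_EFin. Qed.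

Lemma ereal_sup_neg_log2_powR_sum a w :
  1 < a -> (forall b, 0 <= w b) -> 0 < \sum_b w b ->
  ereal_sup [set oppe (if [forall b, (w b != 0) ==> (q b != 0)]
                       then ((a - 1)^-1 * log2 (\sum_b q b `^ (1 - a) * w b `^ a))%:E
                       else +oo%E) | q in [set q : B -> R | prob_dist q]]%classic =
  (a / (1 - a) * log2 (\sum_b w b))%:E.
Proof.
move=> a_gt1 w_ge0 Z_gt0; set Z := \sum_b w b.
have a_gt0 : 0 < a := lt_trans ltr01 a_gt1.
have -> : a / (1 - a) * log2 Z = - ((a - 1)^-1 * log2 (Z `^ a)).
  by rewrite log2_powR; field; rewrite !subr_eq0 (gt_eqF a_gt1) (lt_eqF a_gt1).
apply/eqP; rewrite eq_le; apply/andP; split.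
  apply: ge_ereal_sup => _ [q q_dist <-].
  case: ifP => [/forallP supp|_]; last by rewrite leNye.
  rewrite -EFinN lee_fin lerN2 ler_pM2l ?invr_gt0 ?subr_gt0 // ler_log2 ?powR_gt0 //.
  apply: powR_sum_le (ltW a_gt1) q_dist w_ge0 _ => b qb0.
  by apply/eqP; apply: contraTT (supp b) => ->; rewrite qb0 eqxx.
apply: ereal_sup_ubound; exists (fun b => w b / Z); first exact: prob_dist_normalized.
rewrite ifT ?(powR_sum_normalized a_gt0 w_ge0 Z_gt0) //.
apply/forallP => b; apply/implyP => wb0.
by rewrite mulf_neq0 ?invr_eq0 ?(lt0r_neq0 Z_gt0).
Qed.

End PowerInequalities.

Definition cq_weight (R : realType) (A B C : finType) (a : R) (p : B -> R)
    (rhob : B -> Op R (A * C)%type) (b : B) : R :=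
  p b * sandwiched_trace a (rhob b) (tensI A (ptr1 (rhob b))) `^ a^-1.

Lemma cq_weight_ge0 (R : realType) (A B C : finType) (a : R) (p : B -> R)
    (rhob : B -> Op R (A * C)%type) b :
  0 <= p b -> 0 <= cq_weight a p rhob b.
Proof. by move=> pb_ge0; rewrite mulr_ge0 ?powR_ge0. Qed.

Section ClassicalQuantum.
Variables (R : realType) (A B C : finType) (p q : B -> R).
Variable rhob : B -> Op R (A * C)%type.

Lemma rhoABC_blockdiag : rhoABC p rhob = blockdiag (fun b => (p b)%:C *: rhob b).
Proof. by apply: op_ext => u v; rewrite ent_blockdiag ent_scalemx ent_opE mulrA. Qed.

Lemma tensI_sigmaBC_blockdiag :
  tensI A (sigmaBC q rhob) = blockdiag (fun b => (q b)%:C *: tensI A (ptr1 (rhob b))).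
Proof.
apply: op_ext => u v; rewrite ent_blockdiag ent_scalemx !ent_tensI ent_opE /=.
by ring.
Qed.

Hypothesis dens : forall b, density (rhob b).
Hypothesis p_ge0 : forall b, 0 <= p b.
Hypothesis q_ge0 : forall b, 0 <= q b.

Let normal_sigma_block b : (q b)%:C *: tensI A (ptr1 (rhob b)) \is normalmx.
Proof.
apply/psdmx_normal/psdmx_scale; first by rewrite ler0c.
exact/psdmx_tensI_ptr1/(dens b).1.
Qed.

Lemma mxtrace_rhoABC : \sum_b p b = 1 -> \tr (rhoABC p rhob) = 1.
Proof.
move=> p1; rewrite rhoABC_blockdiag mxtrace_blockdiag (eq_bigr (fun b => (p b)%:C)).
  by rewrite -rmorph_sum p1.
by move=> b _; rewrite mxtraceZ (dens b).2 mulr1.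
Qed.

Lemma sandwich_cq s :
  sandwich s (tensI A (sigmaBC q rhob)) (rhoABC p rhob) =
  blockdiag (fun b => (powR (q b) s * p b * powR (q b) s)%:C *:
                      sandwich s (tensI A (ptr1 (rhob b))) (rhob b)).
Proof.
rewrite /sandwich tensI_sigmaBC_blockdiag (mxpowR_blockdiag _ normal_sigma_block).
rewrite rhoABC_blockdiag !blockdiag_mulmx; congr blockdiag; apply: funext => b.
rewrite (mxpowR_scale s (q_ge0 b) (psdmx_tensI_ptr1 (dens b).1)).
by rewrite -!scalemxAl -!scalemxAr -scalemxAl !scalerA !rmorphM /= mulrAC mulrA.
Qed.

Lemma sandwiched_trace_cq a : 1 < a ->
  sandwiched_trace a (rhoABC p rhob) (tensI A (sigmaBC q rhob)) =
  \sum_b p b `^ a * q b `^ (1 - a) *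
         sandwiched_trace a (rhob b) (tensI A (ptr1 (rhob b))).
Proof.
move=> a_gt1; rewrite /sandwiched_trace sandwich_cq; set s := (1 - a) / (2 * a).
have psd_block b : psdmx (sandwich s (tensI A (ptr1 (rhob b))) (rhob b)).
  exact/psdmx_sandwich/(dens b).1/psdmx_normal/psdmx_tensI_ptr1/(dens b).1.
have c_ge0 b : 0 <= q b `^ s * p b * q b `^ s by rewrite !mulr_ge0 ?powR_ge0.
rewrite mxpowR_blockdiag => [|b]; last first.
  by apply/psdmx_normal/psdmx_scale; rewrite ?ler0c.
rewrite mxtrace_blockdiag raddf_sum /=; apply: eq_bigr => b _.
rewrite (mxpowR_scale a (c_ge0 b) (psd_block b)) mxtraceZ Re_realM.
by rewrite powR_sandwich_weight.
Qed.

Lemma supp_sub_cq :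
  supp_sub (rhoABC p rhob) (tensI A (sigmaBC q rhob)) =
  [forall b, (p b != 0) ==> (q b != 0)].
Proof.
have supp_block b :
    supp_sub ((p b)%:C *: rhob b) ((q b)%:C *: tensI A (ptr1 (rhob b))) =
    (p b != 0) ==> (q b != 0).
  have rhob_neq0 : rhob b != 0.
    apply/eqP => rhob0; have := (dens b).2.
    by rewrite rhob0 mxtrace0 => /esym/eqP; rewrite oner_eq0.
  rewrite (supp_sub_scale _ _ rhob_neq0 (supp_sub_tensI_ptr1 (dens b).1)).
  by rewrite !fmorph_eq0.
rewrite rhoABC_blockdiag tensI_sigmaBC_blockdiag.
apply/idP/forallP => [/(supp_sub_blockdiag _ normal_sigma_block) supp b|pq].
  by rewrite -supp_block.
by apply/(supp_sub_blockdiag _ normal_sigma_block) => b; rewrite supp_block.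
Qed.

Lemma cq_weight_eq0 a b : (cq_weight a p rhob b == 0) = (p b == 0).
Proof.
rewrite mulf_eq0 orb_idr // => /eqP/powR_eq0_eq0/eqP.
by rewrite gt_eqF // sandwiched_trace_tensI_ptr1_gt0.
Qed.

Lemma cq_weight_powR a b : 1 < a ->
  p b `^ a * q b `^ (1 - a) * sandwiched_trace a (rhob b) (tensI A (ptr1 (rhob b))) =
  q b `^ (1 - a) * cq_weight a p rhob b `^ a.
Proof.
move=> a_gt1; rewrite /cq_weight powRM ?powR_ge0 // -powRrM.
rewrite mulVf ?gt_eqF ?(lt_trans ltr01) //.
by rewrite powRr1 ?(ltW (sandwiched_trace_tensI_ptr1_gt0 a (dens b))) // mulrAC mulrC.
Qed.

Lemma Dalpha_cq a : 1 < a -> \sum_b p b = 1 ->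
  Dalpha a (rhoABC p rhob) (tensI A (sigmaBC q rhob)) =
  if [forall b, (cq_weight a p rhob b != 0) ==> (q b != 0)]
  then ((a - 1)^-1 * log2 (\sum_b q b `^ (1 - a) * cq_weight a p rhob b `^ a))%:E
  else +oo%E.
Proof.
move=> a_gt1 p1; rewrite DalphaE supp_sub_cq sandwiched_trace_cq //.
rewrite mxtrace_rhoABC //= divr1.
have -> : [forall b, (cq_weight a p rhob b != 0) ==> (q b != 0)] =
          [forall b, (p b != 0) ==> (q b != 0)].
  by apply: eq_forallb => b; rewrite cq_weight_eq0.
by under eq_bigr do rewrite cq_weight_powR //.
Qed.

End ClassicalQuantum.

Lemma cq_weight_sum_gt0 (R : realType) (A B C : finType) (a : R) (p : B -> R)
    (rhob : B -> Op R (A * C)%type) :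
  prob_dist p -> (forall b, density (rhob b)) -> 0 < \sum_b cq_weight a p rhob b.
Proof.
move=> p_dist dens; apply: prob_dist_wsum_gt0 => // b.
by rewrite powR_gt0 // sandwiched_trace_tensI_ptr1_gt0.
Qed.

Lemma Hpo_cq_weight (R : realType) (A B C : finType) (a : R) (p : B -> R)
    (rhob : B -> Op R (A * C)%type) :
  prob_dist p -> (forall b, density (rhob b)) -> 1 < a ->
  Hpo a p rhob = (a / (1 - a) * log2 (\sum_b cq_weight a p rhob b))%:E.
Proof.
move=> p_dist dens a_gt1.
have a_neq0 : a != 0 by rewrite gt_eqF // (lt_trans ltr01).
have a1_neq0 : a - 1 != 0 by rewrite subr_eq0 gt_eqF.
have term b : ((p b)%:E * pow2e (((1 - a) / a)%:E * Hdown a (rhob b)))%E =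
              (cq_weight a p rhob b)%:E.
  rewrite (Hdown_sandwiched_trace a (dens b)) -[X in pow2e X]EFinM.
  set Qb := sandwiched_trace _ _ _.
  have -> : (1 - a) / a * - ((a - 1)^-1 * log2 Qb) = a^-1 * log2 Qb.
    by field; rewrite a_neq0 a1_neq0.
  by rewrite pow2e_log2 ?sandwiched_trace_tensI_ptr1_gt0 // -EFinM.
by rewrite /Hpo (eq_bigr _ (fun b _ => term b)) sumEFin log2e_EFin ?cq_weight_sum_gt0.
Qed.

Theorem lemma4p2 (R : realType) (A B C : finType) (p : B -> R)
  (rhob : B -> Op R (A * C)%type) (a : R) :
  prob_dist p ->
  (forall b, density (rhob b)) ->
  1 < a ->
  Hpo a p rhob =
  ereal_sup [set (- Dalpha a (rhoABC p rhob) (tensI A (sigmaBC q rhob)))%E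
            | q in [set q : B -> R | prob_dist q]]%classic.
Proof.
move=> p_dist dens a_gt1; have [p_ge0 p1] := p_dist.
rewrite (Hpo_cq_weight p_dist dens a_gt1) -(ereal_sup_neg_log2_powR_sum a_gt1
  (fun b => cq_weight_ge0 a rhob (p_ge0 b)) (cq_weight_sum_gt0 a p_dist dens)).
congr ereal_sup; apply: eq_imagel => q [q_ge0 _].
by rewrite Dalpha_cq.
Qed.
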